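(* Let $\alpha=c+d\rho\in\mathbb{Z}[\rho]$ with $7\le N(\alpha)\equiv 1 \pmod 6$, and suppose $\alpha$ is not an associate of any (rational) integer. Let $\ell=\gcd(c,d)$, $c'=c/\ell$, $d'=d/\ell$ and $\alpha'=c'+d'\rho$. Then $EJ_\alpha$ is an $\ell^2$-fold cover of a 6-valent first-kind Frobenius circulant (with cyclic kernel) that is isomorphic to $EJ_{\alpha'}$.
   Context: $\rho=(1+\sqrt{-3})/2$, $\mathbb{Z}[\rho]=\{x+y\rho: x,y\in\mathbb{Z}\}$ with norm $N(x+y\rho)=x^2+xy+y^2$; $\alpha,\beta$ are associates if $\alpha=\beta\rho^j$ for some integer $j$. For $N(\gamma)\ge 7$, $EJ_\gamma$ is the Cayley graph on the additive group of $\mathbb{Z}[\rho]/(\gamma)$ with connection set $\{\pm[1]_\gamma,\pm[\rho]_\gamma,\pm[\rho^2]_\gamma\}$. A $k$-fold cover of $\Gamma_2$ by $\Gamma_1$ is a surjection $V(\Gamma_1)\to V(\Gamma_2)$ restricting to bijections between neighbourhoods, with all fibres of size $k$. For $n\ge 7$, $TL_n(a,b,c)$ is the Cayley graph on $\mathbb{Z}_n$ with connection set $\{\pm[a],\pm[b],\pm[c]\}$ (these six residues distinct). A Frobenius group is a transitive, non-regular permutation group in which only the identity fixes two points; a finite one is $K\rtimes H$ with regular normal kernel $K$ and point stabiliser $H$ acting on $K$ by conjugation. A first-kind $K\rtimes H$-Frobenius graph is $\mathrm{Cay}(K,s^H)$ with $\langle s^H\rangle=K$ and $|H|$ even or $s$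 an involution. A 6-valent first-kind Frobenius circulant with cyclic kernel is a 6-valent $TL_n(a,b,c)$ that is a first-kind $\mathbb{Z}_n\rtimes H$-Frobenius graph for some $H\le\mathbb{Z}_n^*$ with $\mathbb{Z}_n\rtimes H$ (acting by $[x]^{([y],[m])}=[(x+y)m]$) Frobenius with kernel $\mathbb{Z}_n$. *)

From HB Require Import structures.
From mathcomp Require Import all_boot all_order all_algebra all_fingroup.
Unset Printing Implicit Defensive.
Import GRing.Theory Num.Theory.
Local Open Scope ring_scope.

(* Elements x + y*rho of Z[rho] are represented as pairs (x, y) of integers,
   rho = (1 + sqrt(-3))/2, rho^2 = rho - 1. *)
Definition zr := (int * int)%type.
Definition zmul (p q : zr) : zr :=
  (p.1 * q.1 - p.2 * q.2, p.1 * q.2 + p.2 * q.1 + p.2 * q.2).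
Definition zone : zr := (1, 0).
Definition zrho : zr := (0, 1).
Definition zpow (p : zr) (j : nat) : zr := iter j (zmul p) zone.
Definition znorm (p : zr) : int := p.1 ^+ 2 + p.1 * p.2 + p.2 ^+ 2.
Definition zassoc (a b : zr) : Prop := exists j : nat, a = zmul b (zpow zrho j).

Record fgraph := FGraph { gT : finType; gV : {set gT}; gadj : rel gT }.
Arguments gV : clear implicits.
Arguments gadj : clear implicits.

Definition nbhd (G : fgraph) (v : gT G) : {set gT G} :=
  [set u in gV G | gadj G v u].

Definition is_cover (G1 G2 : fgraph) (k : nat) (f : gT G1 -> gT G2) : Prop :=
  [/\ f @: gV G1 = gV G2,
      (forall v, v \in gV G1 ->
         f @: nbhd G1 v = nbhd G2 (f v) /\ {in nbhd G1 v &, injective f} )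
    & (forall w, w \in gV G2 -> #|[set v in gV G1 | f v == w]| = k)].

Definition covers (G1 G2 : fgraph) (k : nat) : Prop :=
  exists f : gT G1 -> gT G2, is_cover G1 G2 k f.

Definition isomorphic (G1 G2 : fgraph) : Prop :=
  exists f : gT G1 -> gT G2,
    [/\ {in gV G1 &, injective f}, f @: gV G1 = gV G2
      & {in gV G1 &, forall u v, gadj G2 (f u) (f v) = gadj G1 u v}].

(* Since N(gamma) lies in the ideal (gamma), Z[rho]/(gamma) is the quotient of
   (Z_n)^2 (n = N(gamma)) by the image of the ideal; vertices are its cosets. *)
Definition ZR (n : nat) := ('Z_n * 'Z_n)%type.
Definition zr_to (n : nat) (x : zr) : ZR n := (x.1%:~R, x.2%:~R).
Definition zmulZ (n : nat) (p q : ZR n) : ZR n :=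
  (p.1 * q.1 - p.2 * q.2, p.1 * q.2 + p.2 * q.1 + p.2 * q.2).
Definition EJideal (n : nat) (g : zr) : {set ZR n} :=
  [set zmulZ n (zr_to n g) z | z : ZR n].
Definition EJcoset (n : nat) (g : zr) (x : ZR n) : {set ZR n} :=
  [set x + i | i in EJideal n g].
(* connection set {+-1, +-rho, +-rho^2}, rho^2 = -1 + rho *)
Definition EJconn (n : nat) : {set ZR n} :=
  [set:: map (zr_to n) [:: (1, 0); (-1, 0); (0, 1); (0, -1); (-1, 1); (1, -1)]].
Definition EJ (g : zr) : fgraph :=
  let n := `|znorm g|%N in
  @FGraph {set ZR n} [set EJcoset n g x | x : ZR n]
    (fun C D => [exists x, [exists y,
        [&& x \in C, y \in D & (y - x) \in EJconn n]]]).

Definition TLconn (n : nat) (a b c : 'Z_n) : {set 'Z_n} := [set a; -a; b; -b; c; -c].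
Definition TL (n : nat) (a b c : 'Z_n) : fgraph :=
  @FGraph 'Z_n [set: 'Z_n] (fun x y => (y - x) \in TLconn n a b c).

Definition sdact (n : nat) (y : 'Z_n) (m : {unit 'Z_n}) (x : 'Z_n) : 'Z_n :=
  (x + y) * val m.

(* Z_n x| H is a Frobenius group (transitive, non-regular, only the identity
   fixes two points) with kernel Z_n (the Frobenius kernel, i.e. the identity
   together with the fixed-point-free elements, is exactly the set of
   translations). *)
Definition frobenius_ZnH (n : nat) (H : {group {unit 'Z_n}}) : Prop :=
  [/\ (forall x z : 'Z_n, exists y m, m \in H /\ sdact n y m x = z),
      (exists y m x, [/\ m \in H, sdact n y m x = x & exists x', sdact n y m x' != x']),
      (forall y m, m \in H -> forall x1 x2, x1 != x2 ->
          sdact n y m x1 = x1 -> sdact n y m x2 = x2 -> forall x, sdact n y m x = x)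
    & (forall y m, m \in H ->
          ((forall x, sdact n y m x = x) \/ (forall x, sdact n y m x != x)) <->
          (exists t, forall x, sdact n y m x = x + t))].

Definition frob_first_kind_circ (n : nat) (a b c : 'Z_n) : Prop :=
  exists (H : {group {unit 'Z_n}}) (s : 'Z_n),
    let sH := [set s * val h | h in H] in
    [/\ frobenius_ZnH n H,
        sH = TLconn n a b c,
        <<sH>>%g = [set: 'Z_n]
      & (~~ odd #|H| \/ (s != 0 /\ s + s = 0))].

From Pilot Require Import Defs.
From HB Require Import structures.
From mathcomp Require Import all_boot all_order all_algebra all_fingroup.
From mathcomp Require Import ring zify.
Import GRing.Theory Num.Theory.
Local Open Scope ring_scope.
Set Implicit Arguments.
Unset Strict Implicit.

(** Write α = ℓα' with α' = c' + d'ρ primitive and n = N(α').  Since c' and d'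
    are coprime, d' is invertible modulo n and r = -c'/d' is a root of X² - X + 1
    in Z_n, so x + yρ ↦ x + yr is a ring morphism Z[ρ] → Z_n killing α' (hence α)
    and mapping the connection set {±1, ±ρ, ±ρ²} onto {±1, ±r, ±r²}.  As n ≡ 1
    (mod 6), 2 and 3 are units of Z_n: the six values are distinct, and ⟨r⟩ is a
    group of order 6 containing -1 in which r^i - 1 is a unit whenever r^i ≠ 1, so
    Z_n ⋊ ⟨r⟩ is Frobenius and TL_n(1, r, r²) = Cay(Z_n, 1^⟨r⟩) is of the first
    kind.  The induced map Z[ρ]/(α) → Z_n is a local isomorphism of Cayley graphs;
    the ideal (α) has N(α) elements in (Z/N(α))², so each fibre consists of
    N(α)/n = ℓ² cosets, and for α' the fibres are singletons, whence the
    isomorphism.  Finally n ≥ 7: n is prime to 6, n ≠ 1 as α is not an associate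
    of an integer, and 5 is not a norm. *)

Lemma card_uniform_fibers (A B : finType) (h : A -> B) (S : {set A}) k :
  (forall x, x \in S -> #|[set y in S | h y == h x]| = k) ->
  #|S| = (#|h @: S| * k)%N.
Proof.
move=> fiberS.
have -> : #|S| = (\sum_(b in h @: S) #|[set y in S | h y == b]|)%N.
  rewrite -sum1_card (partition_big h (mem (h @: S))) /=; last exact: imset_f.
  by apply: eq_bigr => b _; rewrite -sum1_card; apply: eq_bigl => y; rewrite inE.
by rewrite (eq_bigr (fun _ => k)) ?sum_nat_const // => _ /imsetP [x xS ->]; apply: fiberS.
Qed.

Lemma uniq_map_inj_in (T1 T2 : eqType) (f : T1 -> T2) (s : seq T1) :
  uniq (map f s) -> {in s &, injective f}.
Proof.
elim: s => [|z s IHs] //= /andP [fz_notin uniq_s] x y.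
rewrite !inE => /predU1P [->|xs] /predU1P [->|ys] //.
- by move=> fzy; case/negP: fz_notin; rewrite fzy map_f.
- by move=> fxz; case/negP: fz_notin; rewrite -fxz map_f.
- exact: IHs.
Qed.

Lemma cover1_isomorphic (G1 G2 : Defs.fgraph) (f : gT G1 -> gT G2) (v0 : gT G1) :
  is_cover G1 G2 1 f -> isomorphic G2 G1.
Proof.
(* [v0] is only a default value for the inverse map outside [gV G2]. *)
case=> imfV nbhdf fiber1.
have f_inj : {in gV G1 &, injective f}.
  move=> v1 v2 v1V v2V f12.
  have /eqP/cards1P [v fibE] : #|[set v in gV G1 | f v == f v1]| = 1%N.
    by apply: fiber1; rewrite -imfV imset_f.
  have : v1 \in [set v in gV G1 | f v == f v1] by rewrite inE v1V eqxx.
  have : v2 \in [set v in gV G1 | f v == f v1] by rewrite inE v2V f12 eqxx.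
  by rewrite fibE !inE => /eqP -> /eqP ->.
pose g w := odflt v0 [pick v in gV G1 | f v == w].
have gP w : w \in gV G2 -> g w \in gV G1 /\ f (g w) = w.
  rewrite /g; case: pickP => [v /andP [vV /eqP fv] _ | none]; first by [].
  by rewrite -imfV => /imsetP [v vV fv]; have := none v; rewrite vV fv eqxx.
have adjE (G : Defs.fgraph) v x : x \in gV G -> gadj G v x = (x \in nbhd G v).
  by rewrite inE => ->.
exists g; split.
- by move=> u w /gP [_ fgu] /gP [_ fgw] guw; rewrite -fgu -fgw guw.
- apply/setP => v; apply/imsetP/idP => [[w /gP [gwV _] ->] //|vV].
  have fvV : f v \in gV G2 by rewrite -imfV imset_f.
  by exists (f v) => //; have [gvV fgv] := gP _ fvV; apply: f_inj.
move=> u w /gP [guV fgu] wV; have [gwV fgw] := gP _ wV.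
have nbhdE := proj1 (nbhdf _ guV); rewrite fgu in nbhdE.
rewrite adjE // [RHS]adjE // -nbhdE -{2}fgw.
apply/idP/imsetP => [|[x xN fgwx]]; first by exists (g w).
by rewrite (f_inj _ _ gwV _ fgwx) //; move: xN; rewrite inE => /andP [].
Qed.

Lemma intr_Zp_eq0 (m : nat) (k : int) : (1 < m)%N ->
  ((k%:~R : 'Z_m) == 0) = (m%:Z %| k)%Z.
Proof.
move=> m_gt1.
have natr_eq0 j : ((j%:R : 'Z_m) == 0) = (m %| j)%N.
  by rewrite -val_eqE /= val_Zp_nat.
case: k => j; first exact: natr_eq0.
by rewrite dvdzE NegzE mulrNz oppr_eq0 natr_eq0.
Qed.

Definition zconj (p : zr) : zr := (p.1 + p.2, - p.2).

Lemma znorm_scale (k : int) p : znorm (k * p.1, k * p.2) = k ^+ 2 * znorm p.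
Proof. by rewrite /znorm /=; ring. Qed.

Lemma znorm_sqr_sum (x y : int) : 4 * znorm (x, y) = (2 * x + y) ^+ 2 + 3 * y ^+ 2.
Proof. by rewrite /znorm /=; ring. Qed.

Lemma znorm_ge0 p : 0 <= znorm p.
Proof.
case: p => x y; rewrite -(@pmulr_rge0 _ 4) // znorm_sqr_sum.
by rewrite addr_ge0 ?sqr_ge0 // mulr_ge0 // sqr_ge0.
Qed.

Lemma abs_znorm p : (`|znorm p|%N)%:Z = znorm p.
Proof. by rewrite gez0_abs // znorm_ge0. Qed.

Lemma abs_znorm_scale (l : nat) (p : zr) :
  `|znorm ((l%:Z * p.1)%R, (l%:Z * p.2)%R)|%N = (l ^ 2 * `|znorm p|)%N.
Proof. by apply/eqP; rewrite -eqz_nat !abs_znorm znorm_scale PoszM abs_znorm. Qed.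

Lemma zmulC p q : zmul p q = zmul q p.
Proof. by rewrite /zmul; congr pair; ring. Qed.

Lemma zmul_conjl g x : zmul (zconj g) (zmul g x) = (znorm g * x.1, znorm g * x.2).
Proof. by rewrite /zmul /zconj /znorm /=; congr pair; ring. Qed.

Lemma zmul_conjr g w : zmul g (zmul (zconj g) w) = (znorm g * w.1, znorm g * w.2).
Proof. by rewrite /zmul /zconj /znorm /=; congr pair; ring. Qed.

Lemma zmul_cancel g x y : znorm g != 0 -> zmul g x = zmul g y -> x = y.
Proof.
move=> Ng_neq0 gxy; have := zmul_conjl g x; rewrite gxy zmul_conjl.
by case: x y {gxy} => [x1 x2] [y1 y2] [/(mulfI Ng_neq0) -> /(mulfI Ng_neq0) ->].
Qed.

Definition zlift (m : nat) (x : ZR m) : zr := ((x.1 : nat)%:Z, (x.2 : nat)%:Z).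

Lemma zliftK m : cancel (@zlift m) (zr_to m).
Proof. by case=> a b; rewrite /zr_to /zlift /= -!pmulrn !natr_Zp. Qed.

Lemma zr_toD m : {morph zr_to m : p q / p + q}.
Proof. by move=> p q; rewrite /zr_to /= !intrD. Qed.

Lemma zr_toM m p q : zr_to m (zmul p q) = zmulZ m (zr_to m p) (zr_to m q).
Proof. by rewrite /zr_to /zmul /zmulZ /=; congr pair; rewrite ?(intrD, intrM, intrB, mulrNz). Qed.

Lemma zr_to_eq m p q : (1 < m)%N -> zr_to m p = zr_to m q ->
  exists w : zr, p = q + (m%:Z * w.1, m%:Z * w.2).
Proof.
move=> m_gt1 [pq1 pq2].
have /dvdzP [w1 w1E] : (m%:Z %| p.1 - q.1)%Z by rewrite -intr_Zp_eq0 // intrB pq1 subrr.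
have /dvdzP [w2 w2E] : (m%:Z %| p.2 - q.2)%Z by rewrite -intr_Zp_eq0 // intrB pq2 subrr.
exists (w1, w2); rewrite /= ![m%:Z * _]mulrC -w1E -w2E.
by case: p q {pq1 pq2 w1E w2E} => [? ?] [? ?]; congr pair; rewrite /= addrC subrK.
Qed.

Lemma pairD (U V : zmodType) (a c : U) (b d : V) : (a, b) + (c, d) = (a + c, b + d).
Proof. by []. Qed.

Lemma pairN (U V : zmodType) (a : U) (b : V) : - (a, b) = (- a, - b).
Proof. by []. Qed.

Lemma zmulZDr m p : {morph zmulZ m p : y z / y + z}.
Proof. by case: p => ? ? [? ?] [? ?]; rewrite pairD /zmulZ /= pairD; congr pair; ring. Qed.

Lemma zmulZNr m p : {morph zmulZ m p : y / - y}.
Proof. by case: p => ? ? [? ?]; rewrite pairN /zmulZ /= pairN; congr pair; ring. Qed.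

Lemma zmulZA m p q z : zmulZ m p (zmulZ m q z) = zmulZ m (zmulZ m p q) z.
Proof. by rewrite /zmulZ /=; congr pair; ring. Qed.

Lemma mem_EJideal m g x :
  reflect (exists z, x = zmulZ m (zr_to m g) z) (x \in EJideal m g).
Proof. by apply: (iffP imsetP) => [[z _ ->]|[z ->]]; exists z. Qed.

Lemma EJideal0 m g : 0 \in EJideal m g.
Proof. by apply/mem_EJideal; exists 0; rewrite /zmulZ /=; congr pair; ring. Qed.

Lemma EJidealD m g x y : x \in EJideal m g -> y \in EJideal m g -> x + y \in EJideal m g.
Proof.
move=> /mem_EJideal [z1 ->] /mem_EJideal [z2 ->]; apply/mem_EJideal.
by exists (z1 + z2); rewrite zmulZDr.
Qed.

Lemma EJidealN m g x : x \in EJideal m g -> - x \in EJideal m g.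
Proof. by move=> /mem_EJideal [z ->]; apply/mem_EJideal; exists (- z); rewrite zmulZNr. Qed.

Lemma EJidealB m g x y : x \in EJideal m g -> y \in EJideal m g -> x - y \in EJideal m g.
Proof. by move=> xI /EJidealN; apply: EJidealD. Qed.

Lemma mem_EJcoset m g x y : (y \in EJcoset m g x) = (y - x \in EJideal m g).
Proof.
apply/imsetP/idP => [[i iI ->]|yxI]; first by rewrite addrC addKr.
by exists (y - x) => //; rewrite addrC subrK.
Qed.

Lemma EJcoset_refl m g x : x \in EJcoset m g x.
Proof. by rewrite mem_EJcoset subrr EJideal0. Qed.

Lemma EJcoset_eq m g x y : y \in EJcoset m g x -> EJcoset m g y = EJcoset m g x.
Proof.
rewrite mem_EJcoset => yxI; apply/setP => z; rewrite !mem_EJcoset.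
apply/idP/idP => [zyI|zxI]; first by have := EJidealD zyI yxI; rewrite addrA subrK.
by have := EJidealB zxI yxI; rewrite opprB addrA subrK.
Qed.

Lemma card_fiber_kernel m (V : finType) (h : ZR m -> V) (v0 : V) :
  (forall x y, (h y == h x) = (h (y - x) == v0)) ->
  forall x, #|[set y | h y == h x]| = #|[set y | h y == v0]|.
Proof.
move=> hB x.
have -> : [set y | h y == h x] = [set x + k | k in [set y | h y == v0]].
  apply/setP => y; rewrite inE hB; apply/idP/imsetP => [yx|[k]]; last first.
    by rewrite inE => hk ->; rewrite addrC addKr.
  by exists (y - x); rewrite ?inE // addrC subrK.
by rewrite card_imset //; apply: addrI.
Qed.

Lemma card_ZR_image_kernel m (V : finType) (h : ZR m -> V) (v0 : V) :
  (forall x y, (h y == h x) = (h (y - x) == v0)) ->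
  #|[set: ZR m]| = (#|h @: [set: ZR m]| * #|[set y | h y == v0]|)%N.
Proof.
move=> hB; apply: card_uniform_fibers => x _.
by rewrite -(card_fiber_kernel hB x); apply: eq_card => y; rewrite !inE.
Qed.

Lemma card_ZR m : (1 < m)%N -> #|[set: ZR m]| = (m * m)%N.
Proof. by move=> m_gt1; rewrite cardsT card_prod card_ord Zp_cast. Qed.

Definition mulby m (g : zr) (z : ZR m) : ZR m := zmulZ m (zr_to m g) z.
Definition conjZ {m} (x : ZR m) : ZR m := (x.1 + x.2, - x.2).

Lemma conjZK m : involutive (@conjZ m).
Proof. by case=> a b; rewrite /conjZ /=; congr pair; ring. Qed.

Lemma conjZ_mulby m g (z : ZR m) : conjZ (mulby g z) = mulby (zconj g) (conjZ z).
Proof.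
case: g z => a b [x y]; rewrite /conjZ /mulby /zmulZ /zr_to /zconj /=.
by congr pair; rewrite ?(intrD, intrM, intrB, mulrNz); ring.
Qed.

Lemma EJideal_mulby m g : EJideal m g = mulby g @: [set: ZR m].
Proof. by apply/setP => x; apply/imsetP/imsetP => [[z _ ->]|[z _ ->]]; exists z. Qed.

Lemma ker_mulby m g : (1 < m)%N -> m%:Z = znorm g ->
  [set y : ZR m | mulby g y == 0] = mulby (zconj g) @: [set: ZR m].
Proof.
move=> m_gt1 Ng; apply/setP => y; rewrite inE; apply/eqP/imsetP => [gy0|[z _ ->]].
  have := zr_toM m g (zlift y); rewrite zliftK -/(mulby g y) gy0 -(zliftK 0).
  move/(zr_to_eq m_gt1) => [w]; rewrite add0r /= Ng -zmul_conjr.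
  have Ng_neq0 : znorm g != 0 by rewrite -Ng; lia.
  move/(zmul_cancel Ng_neq0) => yw; exists (zr_to m w); first by rewrite inE.
  by rewrite -(zliftK y) yw zr_toM.
rewrite /mulby zmulZA -zr_toM zmulC.
have -> : zmul (zconj g) g = (m%:Z, 0).
  by rewrite Ng; case: g {Ng} => a b; rewrite /zmul /zconj /znorm /=; congr pair; ring.
have m0 : ((m%:Z)%:~R : 'Z_m) = 0 by apply/eqP; rewrite intr_Zp_eq0.
by rewrite /zmulZ /zr_to /= m0 mulr0z !mul0r !addr0 subr0.
Qed.

Lemma card_EJideal m g : (1 < m)%N -> m%:Z = znorm g -> #|EJideal m g| = m.
Proof.
(* The kernel of multiplication by g is the image of multiplication by its
   conjugate, which conjZ maps onto the ideal; hence #|ideal|^2 = m^2. *)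
move=> m_gt1 Ng.
have mulbyB (x y : ZR m) : (mulby g y == mulby g x) = (mulby g (y - x) == 0).
  by rewrite /mulby zmulZDr zmulZNr subr_eq0.
have kerE : [set y | mulby g y == 0] = conjZ @: EJideal m g.
  rewrite ker_mulby // EJideal_mulby -imset_comp; apply/setP => x.
  apply/imsetP/imsetP => [[z _ ->]|[z _ ->]]; exists (conjZ z) => //.
    by rewrite [RHS]conjZ_mulby conjZK.
  by rewrite [LHS]conjZ_mulby.
have := card_ZR_image_kernel mulbyB.
rewrite card_ZR // -EJideal_mulby kerE (card_imset _ (inv_inj (@conjZK m))).
by rewrite !mulnn => /eqP; rewrite eqn_exp2r // eq_sym => /eqP.
Qed.

Lemma card_EJcoset m g x : #|EJcoset m g x| = #|EJideal m g|.
Proof. by rewrite card_imset //; apply: addrI. Qed.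

Definition zeval (T : pzRingType) (r : T) (p : zr) : T := p.1%:~R + p.2%:~R * r.

Lemma zevalD (T : pzRingType) (r : T) : {morph zeval r : p q / p + q}.
Proof. by case=> [a b] [x y]; rewrite /zeval /= !intrD mulrDl addrACA. Qed.

Lemma zeval_scale (T : pzRingType) (r : T) (k : int) p :
  zeval r (k * p.1, k * p.2) = k%:~R * zeval r p.
Proof. by rewrite /zeval /= !intrM mulrDr mulrA. Qed.

Lemma zevalM (T : comPzRingType) (r : T) p q : r ^+ 2 - r + 1 = 0 ->
  zeval r (zmul p q) = zeval r p * zeval r q.
Proof.
move=> r_root; case: p q => [a b] [x y]; rewrite /zeval /zmul /=.
rewrite !(intrD, intrM, intrB, mulrNz).
set A := a%:~R; set B := b%:~R; set X := x%:~R; set Y := y%:~R.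
have -> : (A + B * r) * (X + Y * r) =
    A * X - B * Y + (A * Y + B * X + B * Y) * r + B * Y * (r ^+ 2 - r + 1) by ring.
by rewrite r_root mulr0 addr0.
Qed.

Definition rho_units : seq zr := [:: (1, 0); (-1, 0); (0, 1); (0, -1); (-1, 1); (1, -1)].

Definition six_units (T : pzRingType) (r : T) : seq T :=
  [:: 1; -1; r; -r; -1 + r; -(-1 + r)].

Lemma zeval_rho_units (T : pzRingType) (r : T) : map (zeval r) rho_units = six_units r.
Proof.
rewrite /zeval /= ?(mulr1z, mulrN1z, mulr0z, mul0r, mul1r, mulN1r, addr0, add0r).
by rewrite /six_units opprD opprK.
Qed.

Lemma mem_TLconn n (r : 'Z_n) x : (x \in TLconn n 1 r (-1 + r)) = (x \in six_units r).
Proof. by rewrite /TLconn !inE !orbA. Qed.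

Lemma nbhd_TL n (a b c w : 'Z_n) : nbhd (TL n a b c) w = [set w + t | t in TLconn n a b c].
Proof.
apply/setP => v; rewrite !inE /=; apply/idP/imsetP => [vw|[t tC ->]].
  by exists (v - w); rewrite // addrCA subrr addr0.
by rewrite addrAC subrr add0r.
Qed.

Definition eval_mod m n (r : 'Z_n) (x : ZR m) : 'Z_n := zeval r (zlift x).

Section ReductionModN.

Variables (m n : nat) (r : 'Z_n).
Hypotheses (m_gt1 : (1 < m)%N) (n_gt1 : (1 < n)%N) (n_dvd_m : (n %| m)%N).

Lemma eval_mod_zr_to p : eval_mod r (zr_to m p) = zeval r p.
Proof.
rewrite /eval_mod; have [w ->] := zr_to_eq m_gt1 (zliftK (zr_to m p)).
have m0 : ((m%:Z)%:~R : 'Z_n) = 0.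
  by apply/eqP; rewrite intr_Zp_eq0 // dvdz_nat.
by rewrite zevalD zeval_scale m0 mul0r addr0.
Qed.

Lemma eval_modD : {morph @eval_mod m n r : x y / x + y}.
Proof.
move=> x y; rewrite -{1}(zliftK x) -{1}(zliftK y) -zr_toD eval_mod_zr_to.
exact: zevalD.
Qed.

Lemma eval_modB : {morph @eval_mod m n r : x y / x - y}.
Proof. by move=> x y; apply/eqP; rewrite eq_sym subr_eq -eval_modD subrK. Qed.

Lemma eval_mod_onto w : exists x : ZR m, eval_mod r x = w.
Proof.
exists (zr_to m ((w : nat)%:Z, 0)).
by rewrite eval_mod_zr_to /zeval /= mul0r addr0 -pmulrn natr_Zp.
Qed.

Lemma eval_mod_EJconn : eval_mod r @: EJconn m = TLconn n 1 r (-1 + r).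
Proof.
apply/setP => w; rewrite mem_TLconn -zeval_rho_units.
apply/imsetP/mapP => [[e eC ->]|[p pU ->]].
  by move: eC; rewrite inE => /mapP [p pU ->]; exists p; rewrite // eval_mod_zr_to.
by exists (zr_to m p); rewrite ?eval_mod_zr_to // inE map_f.
Qed.

Lemma eval_mod_EJconn_inj : uniq (six_units r) -> {in EJconn m &, injective (@eval_mod m n r)}.
Proof.
rewrite -zeval_rho_units => uniq_units e1 e2; rewrite !in_set.
move=> /mapP [p pU ->] /mapP [q qU ->].
by rewrite !eval_mod_zr_to => /(uniq_map_inj_in uniq_units pU qU) ->.
Qed.

End ReductionModN.

Section EJCover.

Variables (g : zr) (n : nat) (r : 'Z_n).
Local Notation m := `|znorm g|%N.
Local Notation coset := (EJcoset m g).
Hypotheses (m_gt1 : (1 < m)%N) (n_gt1 : (1 < n)%N) (n_dvd_m : (n %| m)%N).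
Hypotheses (r_root : r ^+ 2 - r + 1 = 0) (zeval_g : zeval r g = 0).

Definition EJ_to_TL (C : {set ZR m}) : 'Z_n := eval_mod r (repr C).

Lemma eval_mod_EJcoset x y : y \in coset x -> eval_mod r y = eval_mod r x.
Proof.
rewrite mem_EJcoset => /mem_EJideal [z yxE]; apply/eqP; rewrite -subr_eq0.
rewrite -eval_modB // yxE -(zliftK z) -zr_toM.
by rewrite eval_mod_zr_to // zevalM // zeval_g mul0r.
Qed.

Lemma EJ_to_TL_coset x : EJ_to_TL (coset x) = eval_mod r x.
Proof. by apply: eval_mod_EJcoset; apply: (mem_repr x); apply: EJcoset_refl. Qed.

Lemma nbhd_EJ x : nbhd (EJ g) (coset x) = [set coset (x + e) | e in EJconn m].
Proof.
apply/setP => C; rewrite inE; apply/andP/imsetP => [[]|[e eC ->]].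
  move=> /imsetP [y _ ->] /existsP [x1 /existsP [y1 /and3P [x1x y1y e1C]]].
  exists (y1 - x1) => //; rewrite -(EJcoset_eq y1y); apply: EJcoset_eq.
  rewrite mem_EJcoset.
  have -> : y1 - (x + (y1 - x1)) = x1 - x by ring.
  by rewrite -mem_EJcoset.
split; first by apply/imsetP; exists (x + e).
apply/existsP; exists x; apply/existsP; exists (x + e).
by rewrite !EJcoset_refl addrC addKr eC.
Qed.

Lemma EJ_to_TL_nbhd x :
  EJ_to_TL @: nbhd (EJ g) (coset x) = nbhd (TL n 1 r (-1 + r)) (eval_mod r x).
Proof.
rewrite nbhd_EJ nbhd_TL -(eval_mod_EJconn r m_gt1 n_gt1 n_dvd_m) -!imset_comp.
by apply: eq_imset => e /=; rewrite EJ_to_TL_coset eval_modD.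
Qed.

Lemma EJ_to_TL_nbhd_inj x :
  uniq (six_units r) -> {in nbhd (EJ g) (coset x) &, injective EJ_to_TL}.
Proof.
move=> uniq_units C1 C2; rewrite nbhd_EJ => /imsetP [e1 e1C ->] /imsetP [e2 e2C ->].
rewrite !EJ_to_TL_coset !eval_modD // => /addrI /(eval_mod_EJconn_inj m_gt1 n_gt1 n_dvd_m).
by move=> /(_ uniq_units e1C e2C) ->.
Qed.

Lemma card_EJ_to_TL_fiber w :
  #|[set C in gV (EJ g) | EJ_to_TL C == w]| = (m %/ n)%N.
Proof.
have evalB (x y : ZR m) : (eval_mod r y == eval_mod r x) = (eval_mod r (y - x) == 0).
  by rewrite eval_modB // subr_eq0.
pose K := [set y : ZR m | eval_mod r y == 0].
have cardK : (m * m = n * #|K|)%N.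
  have onto : eval_mod r @: [set: ZR m] = [set: 'Z_n].
    apply/setP => v; rewrite inE; have [x <-] := eval_mod_onto r m_gt1 n_gt1 n_dvd_m v.
    exact: imset_f.
  have card_Zn : #|[set: 'Z_n]| = n by rewrite cardsT card_ord Zp_cast.
  by have := card_ZR_image_kernel evalB; rewrite card_ZR // onto card_Zn.
pose P := [set y : ZR m | eval_mod r y == w].
have cardP : #|P| = #|K|.
  rewrite /P; have [x0 <-] := eval_mod_onto r m_gt1 n_gt1 n_dvd_m w.
  exact: card_fiber_kernel evalB x0.
have cardP_cosets : #|P| = (#|coset @: P| * m)%N.
  apply: card_uniform_fibers => x; rewrite inE => /eqP xw.
  have -> : [set y in P | coset y == coset x] = coset x.
    apply/setP => y; rewrite !inE; apply/andP/idP => [[_ /eqP <-]|yx].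
      exact: EJcoset_refl.
    by rewrite (eval_mod_EJcoset yx) xw (EJcoset_eq yx).
  by rewrite card_EJcoset card_EJideal // abs_znorm.
have -> : [set C in gV (EJ g) | EJ_to_TL C == w] = coset @: P.
  apply/setP => C; rewrite inE; apply/andP/imsetP => [[/imsetP [y _ ->]]|[y]].
    by rewrite EJ_to_TL_coset => yw; exists y; rewrite ?inE.
  by rewrite inE => yw ->; split; [apply: imset_f | rewrite EJ_to_TL_coset].
have m_gt0 : (0 < m)%N by apply: ltnW.
apply/eqP; rewrite -(eqn_pmul2l (ltnW n_gt1)) -(eqn_pmul2r m_gt0) -mulnA -cardP_cosets.
by rewrite cardP -cardK [(n * _)%N]mulnC divnK.
Qed.

Lemma EJ_covers_TL : uniq (six_units r) -> covers (EJ g) (TL n 1 r (-1 + r)) (m %/ n).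
Proof.
move=> uniq_units; exists EJ_to_TL; split.
- apply/setP => w; rewrite inE; apply/imsetP.
  have [x <-] := eval_mod_onto r m_gt1 n_gt1 n_dvd_m w.
  by exists (coset x); [apply: imset_f | rewrite EJ_to_TL_coset].
- move=> _ /imsetP [x _ ->]; rewrite EJ_to_TL_coset.
  by split; [exact: EJ_to_TL_nbhd | exact: EJ_to_TL_nbhd_inj].
- by move=> w _; exact: card_EJ_to_TL_fiber.
Qed.

End EJCover.

Lemma TL_isomorphic_EJ g (r : 'Z_(`|znorm g|)) :
  (1 < `|znorm g|)%N -> r ^+ 2 - r + 1 = 0 -> zeval r g = 0 -> uniq (six_units r) ->
  isomorphic (TL `|znorm g| 1 r (-1 + r)) (EJ g).
Proof.
move=> n_gt1 r_root zeval_g uniq_units.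
have [f] := EJ_covers_TL n_gt1 n_gt1 (dvdnn _) r_root zeval_g uniq_units.
by rewrite divnn ltnW // => /cover1_isomorphic; apply; exact: set0.
Qed.

Section PrimitiveSixthRoot.

Variables (T : comUnitRingType) (r : T).
Hypothesis r_root : r ^+ 2 - r + 1 = 0.

Lemma root_sqr : r * r = -1 + r.
Proof. by rewrite -[RHS]addr0 -r_root; ring. Qed.

Lemma root_cube : r ^+ 3 = -1.
Proof. by rewrite exprS expr2 root_sqr mulrDr root_sqr mulrN1 addrCA addNr addr0. Qed.

Lemma six_units_exp i : r ^+ i \in six_units r.
Proof.
elim: i => [|i]; first by rewrite expr0 mem_head.
rewrite exprS !inE.
move=> /orP [/eqP->|/orP [/eqP->|/orP [/eqP->|/orP [/eqP->|/orP [/eqP->|/eqP->]]]]].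
- by rewrite mulr1 eqxx !orbT.
- by rewrite mulrN1 eqxx !orbT.
- by rewrite root_sqr eqxx !orbT.
- by rewrite mulrN root_sqr eqxx !orbT.
- by rewrite mulrDr root_sqr mulrN1 addrCA addNr addr0 eqxx !orbT.
- by rewrite mulrN mulrDr root_sqr mulrN1 addrCA addNr addr0 opprK eqxx.
Qed.

Lemma six_unitsP x : x \in six_units r -> exists i, x = r ^+ i.
Proof.
rewrite !inE.
move=> /orP [/eqP->|/orP [/eqP->|/orP [/eqP->|/orP [/eqP->|/orP [/eqP->|/eqP->]]]]].
- by exists 0%N; rewrite expr0.
- by exists 3%N; rewrite root_cube.
- by exists 1%N; rewrite expr1.
- by exists 4%N; rewrite exprSr root_cube mulN1r.
- by exists 2%N; rewrite expr2 root_sqr.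
- by exists 5%N; rewrite exprSr exprSr root_cube mulN1r mulNr root_sqr.
Qed.

Hypotheses (unit2 : (2 : T) \is a GRing.unit) (unit3 : (3 : T) \is a GRing.unit).

Lemma root_units :
  [/\ r \is a GRing.unit, 1 - r \is a GRing.unit, 1 + r \is a GRing.unit,
      2 - r \is a GRing.unit & 2 * r - 1 \is a GRing.unit].
Proof.
have r1r : r * (1 - r) = 1 by rewrite -[RHS]subr0 -r_root; ring.
have r12r : (1 + r) * (2 - r) = 3 by rewrite -[RHS]subr0 -r_root; ring.
have r21_sqr : (2 * r - 1) * (2 * r - 1) = - 3.
  by rewrite -[RHS]addr0 -(mulr0 4) -r_root; ring.
have /andP [ur u1r] : (r \is a GRing.unit) && (1 - r \is a GRing.unit).
  by rewrite -unitrM r1r unitr1.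
have /andP [u1pr u2r] : (1 + r \is a GRing.unit) && (2 - r \is a GRing.unit).
  by rewrite -unitrM r12r.
have /andP [u2r1 _] : (2 * r - 1 \is a GRing.unit) && (2 * r - 1 \is a GRing.unit).
  by rewrite -unitrM r21_sqr unitrN.
by split.
Qed.

Lemma uniq_six_units : uniq (six_units r).
Proof.
have [ur u1r u1pr u2r u2r1] := root_units.
have uN (x : T) : x \is a GRing.unit -> - x \is a GRing.unit by rewrite unitrN.
have u2x (x : T) : x \is a GRing.unit -> 2 * x \is a GRing.unit by move=> ux; rewrite unitrMl.
have E (x y z : T) : x - y = z -> z \is a GRing.unit -> (x == y) = false.
  by move=> <- uxy; apply/negbTE/eqP => xy; move: uxy; rewrite xy subrr unitr0.
rewrite /= !inE.
rewrite (E 1 (-1) 2) //; last by ring.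
rewrite (E 1 r (1 - r)) //.
rewrite (E 1 (- r) (1 + r)) //; last by ring.
rewrite (E 1 (-1 + r) (2 - r)) //; last by ring.
rewrite (E 1 (- (-1 + r)) r) //; last by ring.
rewrite (E (-1) r (- (1 + r))) ?uN //; last by ring.
rewrite (E (-1) (- r) (- (1 - r))) ?uN //; last by ring.
rewrite (E (-1) (-1 + r) (- r)) ?uN //; last by ring.
rewrite (E (-1) (- (-1 + r)) (- (2 - r))) ?uN //; last by ring.
rewrite (E r (- r) (2 * r)) ?u2x //; last by ring.
rewrite (E r (-1 + r) 1) ?unitr1 //; last by ring.
rewrite (E r (- (-1 + r)) (2 * r - 1)) //; last by ring.
rewrite (E (- r) (-1 + r) (- (2 * r - 1))) ?uN //; last by ring.
rewrite (E (- r) (- (-1 + r)) (- 1)) ?uN ?unitr1 //; last by ring.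
by rewrite (E (-1 + r) (- (-1 + r)) (- (2 * (1 - r)))) ?uN ?u2x //; ring.
Qed.

Lemma six_units_subr1 x : x \in six_units r -> x = 1 \/ x - 1 \is a GRing.unit.
Proof.
have [ur u1r u1pr u2r _] := root_units.
rewrite !inE.
move=> /orP [/eqP->|/orP [/eqP->|/orP [/eqP->|/orP [/eqP->|/orP [/eqP->|/eqP->]]]]].
- by left.
- by right; rewrite -opprD unitrN.
- by right; rewrite -opprB unitrN.
- by right; rewrite -opprD unitrN addrC.
- by right; rewrite (_ : -1 + r - 1 = - (2 - r)) ?unitrN //; ring.
- by right; rewrite (_ : - (-1 + r) - 1 = - r) ?unitrN //; ring.
Qed.

End PrimitiveSixthRoot.

Section AffineAction.

Variables (n : nat) (y : 'Z_n) (k : {unit 'Z_n}).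
Hypothesis k1_or_unit : val k = 1 \/ val k - 1 \is a GRing.unit.

Lemma sdact_fix2 x1 x2 : x1 != x2 ->
  sdact n y k x1 = x1 -> sdact n y k x2 = x2 -> forall x, sdact n y k x = x.
Proof.
rewrite /sdact => x12 fix1 fix2 x; case: k1_or_unit => [k1|uk1].
  have y0 : y = 0 by apply: (@addrI _ x1); rewrite addr0 -[RHS]fix1 k1 mulr1.
  by rewrite k1 y0 addr0 mulr1.
have : (x1 - x2) * (val k - 1) = 0.
  have -> : (x1 - x2) * (val k - 1) = ((x1 + y) * val k - x1) - ((x2 + y) * val k - x2).
    by ring.
  by rewrite fix1 fix2 !subrr.
move=> x12k; have : x1 - x2 = 0 by rewrite -(mulrK uk1 (x1 - x2)) x12k mul0r.
by move/eqP; rewrite subr_eq0 (negbTE x12).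
Qed.

Lemma sdact_translationP :
  ((forall x, sdact n y k x = x) \/ (forall x, sdact n y k x != x)) <->
  (exists t, forall x, sdact n y k x = x + t).
Proof.
split; last first.
  move=> [t sdE]; have [t0 | t_neq0] := eqVneq t 0.
    by left => x; rewrite sdE t0 addr0.
  right => x; rewrite sdE; apply: contra t_neq0 => /eqP xt.
  by apply/eqP/(@addrI _ x); rewrite xt addr0.
case: k1_or_unit => [k1 _|uk1]; first by exists y => x; rewrite /sdact k1 mulr1.
pose M := val k; pose x0 := - (y * M) / (M - 1).
have x0M : x0 * (M - 1) = - (y * M) by rewrite /x0 divrK.
have fix0 : sdact n y k x0 = x0.
  rewrite /sdact -/M (_ : (x0 + y) * M = x0 + (x0 * (M - 1) + y * M)); last by ring.
  by rewrite x0M addNr addr0.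
case=> [idk|fpf]; last by move: (fpf x0); rewrite fix0 eqxx.
have y0 : y = 0 by have := idk (- y); rewrite /sdact addNr mul0r => /eqP; rewrite eq_sym oppr_eq0 => /eqP.
by move: uk1; have := idk 1; rewrite /sdact y0 addr0 mul1r => ->; rewrite subrr unitr0.
Qed.

End AffineAction.

Lemma frobenius_ZnH_intro n (H : {group {unit 'Z_n}}) (h : {unit 'Z_n}) :
  (2 : 'Z_n) \is a GRing.unit -> h \in H -> val h = -1 ->
  (forall k, k \in H -> val k = 1 \/ val k - 1 \is a GRing.unit) ->
  frobenius_ZnH n H.
Proof.
move=> unit2 hH h_neg1 k1_or_unit; split.
- move=> x z; exists (z - x), 1%g; split; first exact: group1.
  by rewrite /sdact [val _]/= mulr1 addrC subrK.
- exists 0, h, 0; split => //; first by rewrite /sdact addr0 mul0r.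
  exists 1; rewrite /sdact addr0 mul1r h_neg1 eq_sym -subr_eq0 opprK.
  by apply: contraTneq unit2 => two0; rewrite (_ : 2 = 1 + 1) // two0 unitr0.
- by move=> y k kH; apply: sdact_fix2; apply: k1_or_unit.
- by move=> y k kH; apply: sdact_translationP; apply: k1_or_unit.
Qed.

Lemma TL_frob_first_kind n (r : 'Z_n) :
  r ^+ 2 - r + 1 = 0 -> (2 : 'Z_n) \is a GRing.unit -> (3 : 'Z_n) \is a GRing.unit ->
  frob_first_kind_circ n 1 r (-1 + r).
Proof.
move=> r_root unit2 unit3; have [ur _ _ _ _] := root_units r_root unit3.
pose u : {unit 'Z_n} := FinRing.unit 'Z_n ur.
have val_uX i : val (u ^+ i)%g = r ^+ i by rewrite FinRing.val_unitX.
exists <[u]>%G, 1.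
have sHE : [set 1 * val k | k in <[u]>%G] = TLconn n 1 r (-1 + r).
  apply/setP => x; rewrite mem_TLconn.
  apply/imsetP/idP => [[k /cycleP [i ->] ->]|/(six_unitsP r_root) [i ->]].
    by rewrite mul1r val_uX six_units_exp.
  by exists (u ^+ i)%g; rewrite ?mem_cycle // mul1r val_uX.
split.
- apply: (frobenius_ZnH_intro (h := (u ^+ 3)%g)) => //; first exact: mem_cycle.
    by rewrite val_uX root_cube.
  move=> k /cycleP [i ->]; rewrite val_uX.
  exact: six_units_subr1 (six_units_exp r_root i).
- exact: sHE.
- apply/eqP; rewrite eqEsubset subsetT /= Zp_cycle cycle_subG.
  by apply: mem_gen; rewrite sHE mem_TLconn mem_head.
- have card_sH : #|[set 1 * val k | k in <[u]>%G]| = #|<[u]>%G|.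
    by apply: card_imset => k1 k2; rewrite !mul1r; apply: val_inj.
  left; rewrite -card_sH sHE (eq_card (mem_TLconn r)).
  by rewrite (card_uniqP (uniq_six_units r_root unit2 unit3)).
Qed.

Lemma znorm_eq1 (x y : int) : znorm (x, y) = 1 -> exists j, (x, y) = zpow zrho j.
Proof.
move=> N1; have := znorm_sqr_sum x y; rewrite N1 !expr2 mulr1 => sum4.
have N1' : x * x + x * y + y * y = 1 by rewrite -N1 /znorm /= !expr2.
have sq1 : 0 <= (2 * x + y) * (2 * x + y) by rewrite -expr2 sqr_ge0.
have sq2 : 0 <= y * y by rewrite -expr2 sqr_ge0.
have y_bound : -1 <= y <= 1 by apply/andP; split; nia.
have u_bound : -2 <= 2 * x + y <= 2 by apply/andP; split; nia.
have ycase : y = -1 \/ y = 0 \/ y = 1 by lia.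
have xcase : x = -1 \/ x = 0 \/ x = 1 by lia.
case: ycase => [->|[->|->]] in N1' *; case: xcase => [->|[->|->]] in N1' *; try lia.
- by exists 4%N.
- by exists 5%N.
- by exists 3%N.
- by exists 0%N.
- by exists 2%N.
- by exists 1%N.
Qed.

Lemma znorm_neq5 (x y : int) : znorm (x, y) != 5.
Proof.
apply/eqP => N5; have := znorm_sqr_sum x y; rewrite N5 !expr2 => sum20.
have N5' : x * x + x * y + y * y = 5 by rewrite -N5 /znorm /= !expr2.
have sq1 : 0 <= (2 * x + y) * (2 * x + y) by rewrite -expr2 sqr_ge0.
have sq2 : 0 <= y * y by rewrite -expr2 sqr_ge0.
have y_bound : -2 <= y <= 2 by apply/andP; split; nia.
have u_bound : -4 <= 2 * x + y <= 4 by apply/andP; split; nia.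
have ycase : y = -2 \/ y = -1 \/ y = 0 \/ y = 1 \/ y = 2 by lia.
have xcase : x = -3 \/ x = -2 \/ x = -1 \/ x = 0 \/ x = 1 \/ x = 2 \/ x = 3 by lia.
by case: ycase => [->|[->|[->|[->|->]]]] in N5' *;
  case: xcase => [->|[->|[->|[->|[->|[->|->]]]]]] in N5' *; lia.
Qed.

Lemma znorm_ge7 p : coprime `|znorm p| 6 -> ~ (exists j, p = zpow zrho j) ->
  (7 <= `|znorm p|)%N.
Proof.
case: p => x y cop6 not_unit.
have N_neq1 : `|znorm (x, y)|%N != 1%N.
  apply/eqP => N1; apply: not_unit; apply: znorm_eq1.
  by rewrite -abs_znorm N1.
have N_neq5 : `|znorm (x, y)|%N != 5%N.
  by apply: contraNneq (znorm_neq5 x y) => N5; rewrite -abs_znorm N5.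
have not2 : ~~ (2 %| `|znorm (x, y)|)%N.
  by rewrite -prime_coprime // coprime_sym (coprime_dvdr _ cop6).
have not3 : ~~ (3 %| `|znorm (x, y)|)%N.
  by rewrite -prime_coprime // coprime_sym (coprime_dvdr _ cop6).
move: N_neq1 N_neq5 not2 not3; set N := `|_|%N; lia.
Qed.

Lemma root_mod_norm (c d u v : int) (n : nat) :
  (1 < n)%N -> n%:Z = znorm (c, d) -> u * c + v * d = 1 ->
  exists r : 'Z_n, r ^+ 2 - r + 1 = 0 /\ zeval r (c, d) = 0.
Proof.
move=> n_gt1 nE uv1.
have N0 : (c%:~R : 'Z_n) ^+ 2 + c%:~R * d%:~R + d%:~R ^+ 2 = 0.
  by apply/eqP; rewrite -!(rmorphXn, rmorphM, rmorphD) /= intr_Zp_eq0 // nE.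
have uv1' : (u%:~R * c%:~R + v%:~R * d%:~R : 'Z_n) = 1 by rewrite -!intrM -intrD uv1.
rewrite /zeval /=.
set C := (c%:~R : 'Z_n) in N0 uv1' *; set D := (d%:~R : 'Z_n) in N0 uv1' *.
set U := (u%:~R : 'Z_n) in uv1'; set V := (v%:~R : 'Z_n) in uv1'.
pose Dinv := - (U ^+ 2 * (C + D)) + 2 * U * V * C + V ^+ 2 * D.
have DDinv : D * Dinv = 1.
  have -> : D * Dinv = (U * C + V * D) ^+ 2 - U ^+ 2 * (C ^+ 2 + C * D + D ^+ 2).
    by rewrite /Dinv; ring.
  by rewrite uv1' N0 mulr0 subr0 expr1n.
(* r = -c/d is the image of rho in Z[rho]/(c + d rho) = Z_n. *)
exists (- (C * Dinv)); split.
  have -> : (- (C * Dinv)) ^+ 2 - (- (C * Dinv)) + 1 =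
      Dinv ^+ 2 * (C ^+ 2 + C * D + D ^+ 2) + C * Dinv * (1 - D * Dinv)
      + (1 - D * Dinv) * (1 + D * Dinv) by ring.
  by rewrite N0 DDinv subrr !mulr0 mul0r !addr0.
have -> : C + D * - (C * Dinv) = C * (1 - D * Dinv) by ring.
by rewrite DDinv subrr mulr0.
Qed.

Lemma primitive_part (c d : int) (l := gcdn `|c| `|d|) : (c != 0) || (d != 0) ->
  [/\ (0 < l)%N, c = l%:Z * (c %/ l%:Z)%Z, d = l%:Z * (d %/ l%:Z)%Z
     & exists u v, u * (c %/ l%:Z)%Z + v * (d %/ l%:Z)%Z = 1].
Proof.
move=> cd_neq0; have l_gt0 : (0 < l)%N by rewrite gcdn_gt0 !absz_gt0.
have cE : c = l%:Z * (c %/ l%:Z)%Z by rewrite mulrC divzK //; apply: dvdz_gcdl.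
have dE : d = l%:Z * (d %/ l%:Z)%Z by rewrite mulrC divzK //; apply: dvdz_gcdr.
split => //; have [u [v uvl]] := Bezoutz c d; exists u, v.
by apply: (@mulfI _ l%:Z); [lia | rewrite mulr1 -[RHS]uvl [in RHS]cE [in RHS]dE; ring].
Qed.

Lemma coprime6_of_mod6 (a n : nat) : ((a * n)%N%:Z %% 6)%Z = 1 -> coprime n 6.
Proof.
rewrite modz_nat => -[an_mod6]; have := coprime_modl (a * n) 6.
by rewrite an_mod6 coprimeMl => /esym /andP [].
Qed.

Lemma EJ_scale_covers_TL (l : nat) (p : zr) (r : 'Z_(`|znorm p|)) :
  (0 < l)%N -> (1 < `|znorm p|)%N -> r ^+ 2 - r + 1 = 0 -> zeval r p = 0 ->
  uniq (six_units r) ->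
  covers (EJ (l%:Z * p.1, l%:Z * p.2)) (TL `|znorm p| 1 r (-1 + r)) (l ^ 2).
Proof.
move=> l_gt0 n_gt1 r_root zeval_p uniq_units.
have zeval_lp : zeval r (l%:Z * p.1, l%:Z * p.2) = 0 by rewrite zeval_scale zeval_p mulr0.
have N_gt1 : (1 < `|znorm ((l%:Z * p.1)%R, (l%:Z * p.2)%R)|)%N.
  by rewrite abs_znorm_scale (leq_trans n_gt1) // leq_pmull // expn_gt0 l_gt0.
have n_dvd_N : (`|znorm p| %| `|znorm ((l%:Z * p.1)%R, (l%:Z * p.2)%R)|)%N.
  by rewrite abs_znorm_scale dvdn_mull.
have := EJ_covers_TL N_gt1 n_gt1 n_dvd_N r_root zeval_lp uniq_units.
by rewrite abs_znorm_scale mulnK // ltnW.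
Qed.

Unset Implicit Arguments.

Theorem corollary4p2 (c d : int) :
  (7 <= znorm (c, d)) ->
  (znorm (c, d) %% 6)%Z = 1 ->
  ~ (exists z : int, zassoc (c, d) (z, 0)) ->
  let l := gcdn `|c| `|d| in
  let alpha' : zr := ((c %/ l%:Z)%Z, (d %/ l%:Z)%Z) in
  exists (n : nat) (a b e : 'Z_n),
    [/\ (7 <= n)%N,
        uniq [:: a; -a; b; -b; e; -e],
        frob_first_kind_circ n a b e,
        covers (EJ (c, d)) (TL n a b e) (l ^ 2)%N
      & isomorphic (TL n a b e) (EJ alpha')].
Proof.
move=> N_ge7 N_mod6 not_assoc l alpha'.
have cd_neq0 : (c != 0) || (d != 0).
  by apply: contraLR N_ge7 => /norP [/negbNE/eqP-> /negbNE/eqP->].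
have [l_gt0 cE dE [u [v uv1]]] := primitive_part cd_neq0; rewrite -/l in l_gt0 cE dE uv1.
set c' := (c %/ l%:Z)%Z in cE dE uv1; set d' := (d %/ l%:Z)%Z in cE dE uv1.
set n := `|znorm (c', d')|%N.
have cop6 : coprime n 6.
  by apply: (@coprime6_of_mod6 (l ^ 2)); rewrite -(abs_znorm_scale l (c', d')) abs_znorm -cE -dE.
have n_ge7 : (7 <= n)%N.
  apply: (znorm_ge7 (p := (c', d')) cop6) => -[j c'd'E]; apply: not_assoc; exists l%:Z, j.
  by rewrite -c'd'E /zmul /= [in LHS]cE [in LHS]dE; congr pair; ring.
have n_gt1 : (1 < n)%N by apply: leq_trans n_ge7.
have [unit2 unit3] : (2 : 'Z_n) \is a GRing.unit /\ (3 : 'Z_n) \is a GRing.unit.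
  by rewrite !unitZpE // !(coprime_dvdr _ cop6).
have [r [r_root zeval_r]] := root_mod_norm n_gt1 (abs_znorm _) uv1.
have uniq_r := uniq_six_units r_root unit2 unit3.
exists n, 1, r, (-1 + r); split => //.
- exact: TL_frob_first_kind.
- by rewrite {1}cE {1}dE; apply: (EJ_scale_covers_TL (p := (c', d'))).
- exact: TL_isomorphic_EJ n_gt1 r_root zeval_r uniq_r.
Qed.
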